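(* Let $M>0$, $\beta^*>0$, and let $g$ be the log-normal density $g(t)=\frac{1}{t\sigma\sqrt{2\pi}}\exp\!\big(-\frac{(\ln t-\mu)^2}{2\sigma^2}\big)$ for $t>0$, $g(t)=0$ for $t\le0$ ($\mu\in\mathbb{R}$, $\sigma>0$). Let $I$ be the unique $C^1$ solution on $[0,\infty)$ of \[ I'(t)=\beta^*(M-I(t))\Big(I(t)-\int_0^t g(t-s)I(s)\,ds\Big),\qquad I(0)=I_0\in[0,M]. \] Then $\lim_{t\to\infty}I'(t)=0$. *)

From Stdlib Require Import Reals.
From Coquelicot Require Import Coquelicot.
Open Scope R_scope.

Definition lognormal (mu sigma : R) (t : R) : R :=
  if Rle_dec t 0 then 0
  else / (t * sigma * sqrt (2 * PI)) * exp (- (ln t - mu) ^ 2 / (2 * sigma ^ 2)).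

Definition rhs (beta M mu sigma : R) (I : R -> R) (t : R) : R :=
  beta * (M - I t) * (I t - RInt (fun s => lognormal mu sigma (t - s) * I s) 0 t).

From Stdlib Require Import Reals Lra Classical.
From Coquelicot Require Import Coquelicot.
Open Scope R_scope.

(* The right-hand side is Lipschitz in the past of
   [I], so a Gronwall argument gives [I <= M], and [I = 0] when [I 0 = 0].  When
   [I 0 > 0] the right-hand side stays nonnegative: as long as [I] is nondecreasing,
   the delay term is at most [I t * G t < I t], where [G t = int_0^t g < 1] because the
   log-normal law has total mass 1 (the Gaussian integral [int exp (-x^2) = sqrt PI],
   obtained by Feynman's trick).  Hence [I] increases to some [L <= M], [G] to some
   [c <= 1], and [I'] converges to [beta (M - L) L (1 - c) >= 0]; a positive limit would
   make the bounded [I] unbounded. *)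

(* Coquelicot's lemmas live in an abstract normed module; these instances state them in
   [R], where [ring], [lra] and [rewrite] can see through the equations. *)
Lemma RInt_Chasles_R (f : R -> R) a b c :
  ex_RInt f a b -> ex_RInt f b c -> RInt f a b + RInt f b c = RInt f a c.
Proof. exact (RInt_Chasles (V := R_CompleteNormedModule) f a b c). Qed.

Lemma RInt_swap_R (f : R -> R) a b : ex_RInt f a b -> RInt f b a = - RInt f a b.
Proof. intros H; rewrite <- (opp_RInt_swap (V := R_CompleteNormedModule)); auto. Qed.

Lemma RInt_scal_R (f : R -> R) a b c :
  ex_RInt f a b -> RInt (fun x => c * f x) a b = c * RInt f a b.
Proof. exact (RInt_scal (V := R_CompleteNormedModule) f a b c). Qed.

Lemma RInt_ext_R (f g : R -> R) a b :
  (forall x, Rmin a b < x < Rmax a b -> f x = g x) -> RInt f a b = RInt g a b.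
Proof. exact (RInt_ext (V := R_CompleteNormedModule) f g a b). Qed.

Lemma ex_RInt_continuous_R (f : R -> R) a b :
  (forall x, continuous f x) -> ex_RInt f a b.
Proof. intros Hf; apply (ex_RInt_continuous (V := R_CompleteNormedModule)); auto. Qed.

Lemma ex_derive_continuous_R (f : R -> R) x : ex_derive f x -> continuous f x.
Proof. exact (ex_derive_continuous (V := R_NormedModule) f x). Qed.

Definition gauss (t : R) : R := exp (- t ^ 2).

Lemma continuous_gauss x : continuous gauss x.
Proof. apply ex_derive_continuous_R; unfold gauss; auto_derive; auto. Qed.

Lemma ex_RInt_gauss a b : ex_RInt gauss a b.
Proof. apply ex_RInt_continuous_R, continuous_gauss. Qed.

(* Feynman's trick: [gauss_energy] has derivative 0 and equals [atan 1] at 0. *)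
Definition gauss_param (x t : R) : R := exp (- x ^ 2 * (1 + t ^ 2)) / (1 + t ^ 2).

Definition gauss_energy (x : R) : R := RInt (gauss_param x) 0 1 + RInt gauss 0 x ^ 2.

Lemma one_plus_sqr_gt0 t : 0 < 1 + t ^ 2.
Proof. nra. Qed.

Lemma continuous_gauss_param x t : continuous (gauss_param x) t.
Proof.
  apply ex_derive_continuous_R; unfold gauss_param; auto_derive.
  pose proof (one_plus_sqr_gt0 t); lra.
Qed.

Lemma Derive_gauss_param x t :
  Derive (fun u => gauss_param u t) x = -2 * x * exp (- x ^ 2 * (1 + t ^ 2)).
Proof.
  apply is_derive_unique; unfold gauss_param; auto_derive; auto.
  set (e := exp _); pose proof (one_plus_sqr_gt0 t); field; lra.
Qed.

Lemma continuity_2d_Derive_gauss_param x t :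
  continuity_2d_pt (fun u v => Derive (fun z => gauss_param z v) u) x t.
Proof.
  apply continuity_2d_pt_ext with (f := fun u v => -2 * u * exp (- (u * u * (1 + v * v)))).
  { intros u v; rewrite Derive_gauss_param; f_equal; f_equal; ring. }
  apply continuity_2d_pt_mult.
  - apply continuity_2d_pt_mult; [apply continuity_2d_pt_const | apply continuity_2d_pt_id1].
  - apply continuity_1d_2d_pt_comp with (f := exp).
    { apply derivable_continuous_pt, derivable_pt_exp. }
    apply continuity_2d_pt_opp, continuity_2d_pt_mult.
    + apply continuity_2d_pt_mult; apply continuity_2d_pt_id1.
    + apply continuity_2d_pt_plus; [apply continuity_2d_pt_const|].
      apply continuity_2d_pt_mult; apply continuity_2d_pt_id2.
Qed.

Lemma is_derive_RInt_gauss_param (x : R) :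
  is_derive (fun u => RInt (gauss_param u) 0 1) x (-2 * exp (- x ^ 2) * RInt gauss 0 x).
Proof.
  replace (-2 * exp (- x ^ 2) * RInt gauss 0 x)
    with (RInt (fun t => Derive (fun u => gauss_param u t) x) 0 1).
  { apply (is_derive_RInt_param gauss_param 0 1 x).
    - apply filter_forall; intros y t _; unfold gauss_param; auto_derive.
      pose proof (one_plus_sqr_gt0 t); lra.
    - intros t _; apply continuity_2d_Derive_gauss_param.
    - apply filter_forall; intros y; apply ex_RInt_continuous_R, continuous_gauss_param. }
  (* substitution [s = x t] *)
  rewrite (RInt_ext_R _ (fun t => x * (-2 * exp (- x ^ 2) * gauss (x * t + 0)))).
  - transitivity (RInt (fun s => -2 * exp (- x ^ 2) * gauss s) (x * 0 + 0) (x * 1 + 0)).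
    + apply (RInt_comp_lin (V := R_CompleteNormedModule)
               (fun s => -2 * exp (- x ^ 2) * gauss s) x 0 0 1).
      apply ex_RInt_continuous_R; intros s.
      apply ex_derive_continuous_R; unfold gauss; auto_derive; auto.
    + replace (x * 0 + 0) with 0 by ring; replace (x * 1 + 0) with x by ring.
      apply RInt_scal_R, ex_RInt_gauss.
  - intros t _; rewrite Derive_gauss_param; unfold gauss.
    replace (- x ^ 2 * (1 + t ^ 2)) with (- x ^ 2 + - (x * t + 0) ^ 2) by ring.
    rewrite exp_plus; ring.
Qed.

Lemma is_derive_gauss_energy (x : R) : is_derive gauss_energy x 0.
Proof.
  assert (Hsq : is_derive (fun u => RInt gauss 0 u ^ 2) x
                  (INR 2 * gauss x * RInt gauss 0 x ^ Init.Nat.pred 2)).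
  { apply (is_derive_pow (fun u => RInt gauss 0 u)).
    apply (is_derive_RInt (V := R_NormedModule) gauss _ 0 x).
    - apply filter_forall; intros.
      apply (RInt_correct (V := R_CompleteNormedModule)), ex_RInt_gauss.
    - apply continuous_gauss. }
  pose proof (is_derive_plus (V := R_NormedModule) _ _ x _ _
                (is_derive_RInt_gauss_param x) Hsq) as H.
  replace 0 with (plus (-2 * exp (- x ^ 2) * RInt gauss 0 x)
                       (INR 2 * gauss x * RInt gauss 0 x ^ Init.Nat.pred 2)); [exact H|].
  unfold plus, gauss; simpl; ring.
Qed.

Lemma gauss_energy_eq x : gauss_energy x = PI / 4.
Proof.
  assert (Hconst : gauss_energy x = gauss_energy 0).
  { destruct (MVT_gen gauss_energy 0 x (fun _ => 0)) as [c [_ Hc]].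
    - intros; apply is_derive_gauss_energy.
    - intros z _; apply continuity_pt_filterlim, ex_derive_continuous_R.
      eexists; apply is_derive_gauss_energy.
    - lra. }
  rewrite Hconst; unfold gauss_energy; rewrite RInt_point.
  rewrite (RInt_ext_R _ (fun t => / (1 + t ^ 2))).
  - rewrite (is_RInt_unique (V := R_CompleteNormedModule) _ 0 1 (atan 1 - atan 0)).
    + rewrite atan_1, atan_0; unfold zero; simpl; field.
    + apply (is_RInt_derive (V := R_CompleteNormedModule) atan).
      * intros; apply is_derive_Reals, derivable_pt_lim_atan.
      * intros t _; apply ex_derive_continuous_R; auto_derive.
        pose proof (one_plus_sqr_gt0 t); lra.
  - intros t _; unfold gauss_param.
    replace (- 0 ^ 2 * (1 + t ^ 2)) with 0 by ring; rewrite exp_0; field.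
    pose proof (one_plus_sqr_gt0 t); lra.
Qed.

Lemma Rabs_RInt_gauss_le x : Rabs (RInt gauss 0 x) <= sqrt PI / 2.
Proof.
  assert (Hparam : 0 <= RInt (gauss_param x) 0 1).
  { apply RInt_ge_0; [lra | apply ex_RInt_continuous_R, continuous_gauss_param |].
    intros t _; unfold gauss_param; pose proof (one_plus_sqr_gt0 t).
    apply Rlt_le, Rdiv_lt_0_compat; [apply exp_pos | lra]. }
  pose proof (gauss_energy_eq x) as E; unfold gauss_energy in E.
  pose proof (sqrt_sqrt PI (Rlt_le _ _ PI_RGT_0)); pose proof (sqrt_pos PI).
  apply Rabs_le; split; nra.
Qed.

Lemma RInt_gauss_le a b : RInt gauss a b <= sqrt PI.
Proof.
  rewrite <- (RInt_Chasles_R gauss a 0 b), RInt_swap_R by apply ex_RInt_gauss.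
  pose proof (Rabs_RInt_gauss_le a); pose proof (Rabs_RInt_gauss_le b).
  pose proof (Rle_abs (RInt gauss 0 b)); pose proof (Rle_abs (- RInt gauss 0 a)).
  rewrite Rabs_Ropp in *; lra.
Qed.

Lemma sqrt_2PI_gt0 : 0 < sqrt (2 * PI).
Proof. apply sqrt_lt_R0; pose proof PI_RGT_0; lra. Qed.

Definition lognormal_cdf (mu sigma t : R) : R := RInt (lognormal mu sigma) 0 t.

Section Lognormal.
Variables (mu sigma : R).
Hypothesis Hsigma : 0 < sigma.
Local Notation g := (lognormal mu sigma).

Lemma lognormal_pos_eq t : 0 < t ->
  g t = / (t * sigma * sqrt (2 * PI)) * exp (- (ln t - mu) ^ 2 / (2 * sigma ^ 2)).
Proof. intros Ht; unfold lognormal; destruct (Rle_dec t 0); [lra | auto]. Qed.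

Lemma lognormal_nonpos t : t <= 0 -> g t = 0.
Proof. intros Ht; unfold lognormal; destruct (Rle_dec t 0); [auto | lra]. Qed.

Lemma lognormal_gt0 t : 0 < t -> 0 < g t.
Proof.
  intros Ht; rewrite lognormal_pos_eq by auto; pose proof sqrt_2PI_gt0.
  apply Rmult_lt_0_compat; [apply Rinv_0_lt_compat, Rmult_lt_0_compat | apply exp_pos].
  - apply Rmult_lt_0_compat; auto.
  - auto.
Qed.

Lemma lognormal_ge0 t : 0 <= g t.
Proof.
  destruct (Rle_dec t 0).
  - rewrite lognormal_nonpos by auto; lra.
  - apply Rlt_le, lognormal_gt0; lra.
Qed.

Lemma lognormal_le_linear t : 0 < t ->
  g t <= exp (2 * sigma ^ 2 - 2 * mu) / (sigma * sqrt (2 * PI)) * t.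
Proof.
  intros Ht; rewrite lognormal_pos_eq by auto; pose proof sqrt_2PI_gt0.
  (* completing the square in [ln t] *)
  assert (Hexp : exp (- (ln t - mu) ^ 2 / (2 * sigma ^ 2)) <= t * t * exp (2 * sigma ^ 2 - 2 * mu)).
  { rewrite <- (exp_ln t) at 2 3 by auto; rewrite <- !exp_plus.
    assert (Hs2 : 0 < 2 * sigma ^ 2) by nra.
    assert (Hsq : 0 <= (ln t - mu + 2 * sigma ^ 2) ^ 2 / (2 * sigma ^ 2))
      by (apply Rdiv_le_0_compat; [apply pow2_ge_0 | auto]).
    replace ((ln t - mu + 2 * sigma ^ 2) ^ 2 / (2 * sigma ^ 2))
      with ((ln t - mu) ^ 2 / (2 * sigma ^ 2) + 2 * (ln t - mu) + 2 * sigma ^ 2) in Hsq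
      by (field; lra).
    destruct (Rle_lt_or_eq_dec (- (ln t - mu) ^ 2 / (2 * sigma ^ 2))
                (ln t + ln t + (2 * sigma ^ 2 - 2 * mu))) as [Hlt | ->].
    - unfold Rdiv in *; lra.
    - apply Rlt_le, exp_increasing, Hlt.
    - lra. }
  assert (Hden : 0 < t * sigma * sqrt (2 * PI)) by (apply Rmult_lt_0_compat; nra).
  apply Rle_trans with (/ (t * sigma * sqrt (2 * PI)) * (t * t * exp (2 * sigma ^ 2 - 2 * mu))).
  - apply Rmult_le_compat_l; [apply Rlt_le, Rinv_0_lt_compat |]; auto.
  - right; field; split; lra.
Qed.

Lemma continuous_lognormal x : continuous g x.
Proof.
  destruct (Rtotal_order x 0) as [Hx | [-> | Hx]].
  - apply (continuous_ext_loc _ (fun _ => 0)); [| apply continuous_const].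
    apply (filter_imp (fun y => y < 0)); [| apply open_lt; auto].
    intros y Hy; rewrite lognormal_nonpos; lra.
  - set (C := exp (2 * sigma ^ 2 - 2 * mu) / (sigma * sqrt (2 * PI))).
    unfold continuous; rewrite lognormal_nonpos by lra.
    apply (filterlim_le_le (F := locally 0) (fun _ => 0) g (fun y => C * Rabs y) (Finite 0)).
    + apply filter_forall; intros y; split; [apply lognormal_ge0 |].
      destruct (Rle_dec y 0).
      * rewrite lognormal_nonpos by auto.
        apply Rmult_le_pos; [| apply Rabs_pos].
        unfold C; pose proof sqrt_2PI_gt0; pose proof (exp_pos (2 * sigma ^ 2 - 2 * mu)).
        apply Rlt_le, Rdiv_lt_0_compat; nra.
      * rewrite Rabs_pos_eq by lra; apply lognormal_le_linear; lra.
    + apply filterlim_const.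
    + replace (Finite 0) with (Finite (C * Rabs 0)) by (rewrite Rabs_R0, Rmult_0_r; auto).
      apply (continuous_mult (fun _ => C) Rabs), continuous_Rabs.
      apply continuous_const.
  - apply (continuous_ext_loc _ (fun t => / (t * sigma * sqrt (2 * PI))
                                          * exp (- (ln t - mu) ^ 2 / (2 * sigma ^ 2)))).
    + apply (filter_imp (fun y => 0 < y)); [| apply open_gt; auto].
      intros y Hy; rewrite lognormal_pos_eq; auto.
    + apply ex_derive_continuous_R; pose proof sqrt_2PI_gt0; auto_derive.
      repeat split; try lra; apply Rgt_not_eq, Rmult_lt_0_compat; [apply Rmult_lt_0_compat |]; auto.
Qed.

Lemma ex_RInt_lognormal a b : ex_RInt g a b.
Proof. apply ex_RInt_continuous_R, continuous_lognormal. Qed.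

Lemma continuous_lognormal_reflect t x : continuous (fun s => g (t - s)) x.
Proof.
  apply (continuous_comp (fun s => t - s) g); [| apply continuous_lognormal].
  apply ex_derive_continuous_R; auto_derive; auto.
Qed.

Lemma RInt_lognormal_reflect t a b : RInt (fun s => g (t - s)) a b = RInt g (t - b) (t - a).
Proof.
  pose proof (RInt_comp_lin (V := R_CompleteNormedModule) g (-1) t a b
                (ex_RInt_lognormal _ _)) as E.
  rewrite (RInt_ext_R _ (fun s => -1 * g (t - s))) in E
    by (intros; unfold scal; simpl; unfold mult; simpl; do 2 f_equal; ring).
  rewrite RInt_scal_R in E by (apply ex_RInt_continuous_R, continuous_lognormal_reflect).
  replace (-1 * a + t) with (t - a) in E by ring; replace (-1 * b + t) with (t - b) in E by ring.
  rewrite (RInt_swap_R g (t - b)) in E by apply ex_RInt_lognormal; lra.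
Qed.


(* substitution [s = exp (mu + sigma sqrt 2 v)] turns [g] into [gauss / sqrt PI] *)
Lemma RInt_lognormal_pos_le1 a b : 0 < a -> 0 < b -> RInt g a b <= 1.
Proof.
  intros Ha Hb.
  pose proof Rlt_sqrt2_0; pose proof (sqrt_lt_R0 PI PI_RGT_0).
  set (k := sigma * sqrt 2); assert (Hk : 0 < k) by (unfold k; nra).
  set (phi := fun v => exp (mu + k * v)).
  assert (Hphi : forall s, 0 < s -> phi ((ln s - mu) / k) = s).
  { intros s Hs; unfold phi; replace (mu + k * ((ln s - mu) / k)) with (ln s) by (field; lra).
    apply exp_ln; auto. }
  rewrite <- (Hphi a), <- (Hphi b) by auto.
  rewrite <- (RInt_comp (V := R_CompleteNormedModule) g phi (fun v => k * phi v)).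
  - rewrite (RInt_ext_R _ (fun v => / sqrt PI * gauss v)).
    + rewrite RInt_scal_R by apply ex_RInt_gauss.
      apply Rmult_le_reg_l with (sqrt PI); auto.
      rewrite <- Rmult_assoc, Rinv_r, Rmult_1_l, Rmult_1_r by lra.
      apply RInt_gauss_le.
    + intros v _; unfold scal; simpl; unfold mult; simpl.
      rewrite lognormal_pos_eq by apply exp_pos; unfold phi, gauss; rewrite ln_exp.
      replace ((mu + k * v - mu) ^ 2) with (2 * sigma ^ 2 * v ^ 2)
        by (unfold k; replace ((mu + sigma * sqrt 2 * v - mu) ^ 2)
                        with (sigma ^ 2 * v ^ 2 * sqrt 2 ^ 2) by ring;
            rewrite pow2_sqrt by lra; ring).
      replace (- (2 * sigma ^ 2 * v ^ 2) / (2 * sigma ^ 2)) with (- v ^ 2) by (field; lra).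
      rewrite sqrt_mult by (pose proof PI_RGT_0; lra).
      pose proof (exp_pos (mu + k * v)); unfold k in *; field; repeat split; lra.
  - intros; apply continuous_lognormal.
  - intros v _; split.
    + unfold phi; auto_derive; auto; ring.
    + apply ex_derive_continuous_R; unfold phi; auto_derive; auto.
Qed.

Lemma lognormal_cdf_ge0 t : 0 <= t -> 0 <= lognormal_cdf mu sigma t.
Proof.
  intros Ht; apply RInt_ge_0; auto; [apply ex_RInt_lognormal | intros; apply lognormal_ge0].
Qed.

Lemma lognormal_cdf_incr s t : s <= t -> lognormal_cdf mu sigma s <= lognormal_cdf mu sigma t.
Proof.
  intros Hst; unfold lognormal_cdf.
  rewrite <- (RInt_Chasles_R g 0 s t) by apply ex_RInt_lognormal.
  enough (0 <= RInt g s t) by lra.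
  apply RInt_ge_0; auto; [apply ex_RInt_lognormal | intros; apply lognormal_ge0].
Qed.

Lemma lognormal_cdf_le1 t : 0 <= t -> lognormal_cdf mu sigma t <= 1.
Proof.
  intros Ht; destruct (Req_dec t 0) as [-> | Ht0].
  { unfold lognormal_cdf; rewrite RInt_point; unfold zero; simpl; lra. }
  assert (Hlim : filterlim (fun a => RInt g a t) (at_right 0) (locally (lognormal_cdf mu sigma t))).
  { apply (filterlim_filter_le_1 (F := locally 0)); [intros P [d Hd]; exists d; auto |].
    apply (continuous_RInt_2 g 0 t (fun a => RInt g a t)).
    apply filter_forall; intros a.
    apply (RInt_correct (V := R_CompleteNormedModule)), ex_RInt_lognormal. }
  apply (filterlim_le (F := at_right 0) (fun a => RInt g a t) (fun _ => 1)
           (lognormal_cdf mu sigma t) 1); [| exact Hlim | apply filterlim_const].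
  exists (mkposreal 1 Rlt_0_1); intros a _ Ha; apply RInt_lognormal_pos_le1; lra.
Qed.

Lemma lognormal_cdf_lt1 t : 0 <= t -> lognormal_cdf mu sigma t < 1.
Proof.
  intros Ht; pose proof (lognormal_cdf_le1 (t + 1) ltac:(lra)) as H1; unfold lognormal_cdf in *.
  rewrite <- (RInt_Chasles_R g 0 t (t + 1)) in H1 by apply ex_RInt_lognormal.
  enough (0 < RInt g t (t + 1)) by lra.
  apply RInt_gt_0; [lra | intros; apply lognormal_gt0; lra | intros; apply continuous_lognormal].
Qed.

End Lognormal.

Lemma mvt_interior (f df : R -> R) a b : a < b ->
  (forall x, a < x < b -> is_derive f x (df x)) ->
  (forall x, a <= x <= b -> continuity_pt f x) ->
  exists c, a < c < b /\ f b - f a = df c * (b - a).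
Proof.
  intros Hab Hd Hc.
  assert (prf : forall c, a < c < b -> derivable_pt f c)
    by (intros c Hc'; exists (df c); apply is_derive_Reals, Hd; auto).
  assert (prid : forall c, a < c < b -> derivable_pt id c) by (intros; apply derivable_pt_id).
  destruct (MVT f id a b prf prid Hab Hc) as [c [Hc' E]].
  { intros; apply derivable_continuous_pt, derivable_pt_id. }
  exists c; split; auto.
  rewrite (derive_pt_eq_0 f c (df c) (prf c Hc')) in E by (apply is_derive_Reals, Hd; auto).
  rewrite (derive_pt_eq_0 id c 1 (prid c Hc')) in E by apply derivable_pt_lim_id.
  unfold id in E; lra.
Qed.

Section Gronwall.
Variables (w dw : R -> R) (a T L : R).
Hypotheses (HL : 0 <= L) (Hwa : w a = 0)
  (Hcont : forall x, a <= x <= T -> continuity_pt w x)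
  (Hder : forall x, a < x < T -> is_derive w x (dw x))
  (Hdw : forall x B, a < x < T -> (forall s, a <= s <= x -> Rabs (w s) <= B) ->
           Rabs (dw x) <= L * B).

Let tau := / (2 * (L + 1)).

Let tau_gt0 : 0 < tau.
Proof. apply Rinv_0_lt_compat; lra. Qed.

Let L_tau_le : L * tau <= / 2.
Proof.
  unfold tau; rewrite Rinv_mult.
  enough (L * / (L + 1) <= 1) by nra.
  apply Rmult_le_reg_r with (L + 1); [lra |].
  rewrite Rmult_assoc, Rinv_l by lra; lra.
Qed.

(* At a point [m] where [|w|] is maximal on [[a, c]], the MVT from [b] gives
   [|w m| <= L tau |w m| <= |w m| / 2]. *)
Lemma gronwall_step b c : a <= b <= c -> c <= T -> c <= b + tau ->
  (forall s, a <= s <= b -> w s = 0) -> forall s, a <= s <= c -> w s = 0.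
Proof.
  intros Hbc HcT Hctau Hb.
  destruct (continuity_ab_maj (fun x => Rabs (w x)) a c) as [m [Hmax Hm]]; [lra | |].
  { intros x Hx; apply (continuity_pt_comp w Rabs); [apply Hcont; lra | apply Rcontinuity_abs]. }
  assert (Hwm : Rabs (w m) = 0).
  { destruct (Rle_dec m b) as [Hmb | Hmb]; [rewrite Hb by lra; apply Rabs_R0 |].
    destruct (mvt_interior w dw b m) as [xi [Hxi E]]; [lra | intros; apply Hder; lra |
                                                       intros; apply Hcont; lra |].
    rewrite (Hb b), Rminus_0_r in E by lra.
    assert (Hdxi : Rabs (dw xi) <= L * Rabs (w m)) by (apply Hdw; [lra | intros; apply Hmax; lra]).
    assert (Hwm_le : Rabs (w m) <= L * Rabs (w m) * tau).
    { rewrite E at 1; rewrite Rabs_mult, (Rabs_pos_eq (m - b)) by lra.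
      pose proof (Rabs_pos (dw xi)).
      apply Rle_trans with (L * Rabs (w m) * (m - b)); [apply Rmult_le_compat_r; lra |].
      apply Rmult_le_compat_l; [apply Rmult_le_pos, Rabs_pos |]; lra. }
    pose proof (Rabs_pos (w m)).
    assert (L * tau * Rabs (w m) <= / 2 * Rabs (w m)) by (apply Rmult_le_compat_r; lra).
    nra. }
  intros s Hs; pose proof (Hmax s Hs); pose proof (Rabs_pos (w s)).
  apply Rabs_eq_0; lra.
Qed.

Lemma gronwall_zero t : a <= t <= T -> w t = 0.
Proof.
  intros Ht.
  assert (Hn : forall n s, a <= s <= Rmin (a + INR n * tau) T -> w s = 0).
  { induction n as [| n IH]; intros s Hs.
    - simpl in Hs; replace s with a by (revert Hs; unfold Rmin; destruct Rle_dec; lra); auto.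
    - apply (gronwall_step (Rmin (a + INR n * tau) T) (Rmin (a + INR (S n) * tau) T)); auto.
      + rewrite S_INR; pose proof (pos_INR n); pose proof tau_gt0.
        unfold Rmin; repeat destruct Rle_dec; nra.
      + apply Rmin_r.
      + rewrite S_INR; unfold Rmin; repeat destruct Rle_dec; lra. }
  destruct (INR_archimed tau (t - a) tau_gt0) as [n Hn'].
  apply (Hn n); split; [lra | apply Rmin_glb; lra].
Qed.

End Gronwall.

Lemma real_induction (P : R -> Prop) :
  (forall T, 0 <= T -> (forall t, 0 < t < T -> P t) ->
     exists d, 0 < d /\ forall t, 0 < t < T + d -> P t) ->
  forall t, 0 < t -> P t.
Proof.
  intros Hext.
  set (E := fun T => 0 <= T /\ forall t, 0 < t < T -> P t).
  assert (Hcover : forall u, is_upper_bound E u \/ exists T, E T /\ u < T).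
  { intros u; destruct (classic (exists T, E T /\ u < T)) as [| Hno]; [right; auto | left].
    intros T HT; apply Rnot_lt_le; intros HuT; apply Hno; eauto. }
  intros t Ht; destruct (Hcover t) as [Hub | [T [[_ HT] HtT]]]; [exfalso | apply HT; lra].
  destruct (completeness E) as [S [HSub HSlub]];
    [exists t; auto | exists 0; split; [lra | intros; lra] |].
  assert (HES : E S).
  { split; [apply HSub; split; [lra | intros; lra] |].
    intros u Hu; destruct (Hcover u) as [Hu' | [T [[_ HT] HuT]]]; [| apply HT; lra].
    pose proof (HSlub u Hu'); lra. }
  destruct HES as [HS0 HS]; destruct (Hext S HS0 HS) as [d [Hd HSd]].
  assert (S + d <= S) by (apply HSub; split; [lra | auto]); lra.
Qed.

Lemma is_lim_incr_bounded (f : R -> R) B :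
  (forall x y, 0 <= x <= y -> f x <= f y) -> (forall x, 0 <= x -> f x <= B) ->
  exists l, (forall x, 0 <= x -> f x <= l) /\ is_lim f p_infty l.
Proof.
  intros Hincr HB.
  set (E := fun y => exists x, 0 <= x /\ y = f x).
  destruct (completeness E) as [l [Hub Hlub]].
  { exists B; intros y [x [Hx ->]]; auto. }
  { exists (f 0), 0; split; [lra | auto]. }
  assert (Hle : forall x, 0 <= x -> f x <= l) by (intros x Hx; apply Hub; exists x; auto).
  exists l; split; auto.
  apply is_lim_spec; intros eps.
  destruct (classic (exists A, 0 <= A /\ l - eps < f A)) as [[A [HA HfA]] | Hno].
  - exists A; intros x Hx; pose proof (Hincr A x ltac:(lra)); pose proof (Hle x ltac:(lra)).
    apply Rabs_def1; lra.
  - exfalso.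
    assert (Hub' : is_upper_bound E (l - eps)).
    { intros y [x [Hx ->]]; apply Rnot_lt_le; intros Hlt; apply Hno; eauto. }
    pose proof (Hlub _ Hub'); pose proof (cond_pos eps); lra.
Qed.

Lemma is_lim_le_bound (f : R -> R) (B l : R) :
  (forall x, 0 <= x -> f x <= B) -> is_lim f p_infty l -> l <= B.
Proof.
  intros HB Hlim.
  apply (is_lim_le_loc f (fun _ => B) p_infty l B); [| auto | apply is_lim_const].
  exists 0; intros x Hx; apply HB; lra.
Qed.

Lemma lim_derive_le0 (f df : R -> R) (B l : R) :
  (forall t, 0 < t -> is_derive f t (df t)) -> (forall t, 0 < t -> f t <= B) ->
  is_lim df p_infty l -> l <= 0.
Proof.
  intros Hder HB Hlim; apply Rnot_lt_le; intros Hl.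
  apply is_lim_spec in Hlim; destruct (Hlim (mkposreal (l / 2) ltac:(lra))) as [T HT]; simpl in HT.
  set (T0 := Rmax T 0 + 1).
  assert (HT0 : T < T0 /\ 0 < T0)
    by (unfold T0; pose proof (Rmax_l T 0); pose proof (Rmax_r T 0); lra).
  set (s := 2 * (B - f T0) / l + 1).
  assert (Hs : 0 < s) by (unfold s; pose proof (HB T0 ltac:(lra));
                          assert (0 <= 2 * (B - f T0) / l) by (apply Rdiv_le_0_compat; lra); lra).
  destruct (mvt_interior f df T0 (T0 + s)) as [xi [Hxi E]]; [lra | intros; apply Hder; lra | |].
  { intros x Hx; apply continuity_pt_filterlim, ex_derive_continuous_R; eexists; apply Hder; lra. }
  pose proof (HT xi ltac:(lra)) as Hdxi; apply Rabs_def2 in Hdxi.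
  assert (l / 2 * s <= df xi * s) by (apply Rmult_le_compat_r; lra).
  assert (l / 2 * s = B - f T0 + l / 2) by (unfold s; field; lra).
  pose proof (HB (T0 + s) ltac:(lra)); lra.
Qed.

Section DelayEquation.
Variables (M beta mu sigma : R) (I : R -> R).
Hypotheses (HM : 0 < M) (Hbeta : 0 < beta) (Hsigma : 0 < sigma) (HI0 : 0 <= I 0 <= M)
  (Hcont0 : filterlim I (at_right 0) (locally (I 0)))
  (Hder : forall t, 0 < t -> is_derive I t (rhs beta M mu sigma I t)).

Local Notation g := (lognormal mu sigma).
Local Notation G := (lognormal_cdf mu sigma).

(* [I] is only meaningful on [[0, +oo)]; extending it by [I 0] to the left
   makes it continuous everywhere. *)
Definition Iext (s : R) : R := I (Rmax 0 s).

Definition conv (t : R) : R := RInt (fun s => g (t - s) * Iext s) 0 t.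

Definition rhs_ext (t : R) : R := beta * (M - Iext t) * (Iext t - conv t).

Lemma Iext_eq s : 0 <= s -> Iext s = I s.
Proof. intros; unfold Iext; rewrite Rmax_right; auto. Qed.

Lemma Iext_nonpos s : s <= 0 -> Iext s = I 0.
Proof. intros; unfold Iext; rewrite Rmax_left; auto. Qed.

Lemma continuous_Iext x : continuous Iext x.
Proof.
  destruct (Rtotal_order x 0) as [Hx | [-> | Hx]].
  - apply (continuous_ext_loc _ (fun _ => I 0)); [| apply continuous_const].
    apply (filter_imp (fun y => y < 0)); [| apply open_lt; auto].
    intros y Hy; rewrite Iext_nonpos; lra.
  - intros P [eps HP]; rewrite Iext_nonpos in HP by lra.
    destruct (Hcont0 (ball (I 0) eps) (locally_ball _ _)) as [d Hd].
    exists d; intros y Hy; destruct (Rle_dec y 0).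
    + rewrite Iext_nonpos by auto; apply HP, ball_center.
    + rewrite Iext_eq by lra; apply HP, Hd; auto; lra.
  - apply (continuous_ext_loc _ I).
    + apply (filter_imp (fun y => 0 < y)); [| apply open_gt; auto].
      intros y Hy; rewrite Iext_eq; lra.
    + apply ex_derive_continuous_R; eexists; apply Hder; auto.
Qed.

Lemma continuity_Iext : continuity Iext.
Proof. intros x; apply continuity_pt_filterlim, continuous_Iext. Qed.

Lemma ex_RInt_conv_integrand t a b : ex_RInt (fun s => g (t - s) * Iext s) a b.
Proof.
  apply ex_RInt_continuous_R; intros x.
  apply (continuous_mult (K := R_AbsRing) (fun s => g (t - s)) Iext).
  - apply continuous_lognormal_reflect; auto.
  - apply continuous_Iext.
Qed.

Lemma rhs_eq t : 0 < t -> rhs beta M mu sigma I t = rhs_ext t.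
Proof.
  intros Ht; unfold rhs, rhs_ext, conv; rewrite Iext_eq by lra.
  rewrite (RInt_ext_R _ (fun s => g (t - s) * Iext s)); auto.
  intros s Hs; rewrite Rmin_left in Hs by lra; rewrite Iext_eq; lra.
Qed.

Lemma is_derive_Iext t : 0 < t -> is_derive Iext t (rhs_ext t).
Proof.
  intros Ht; rewrite <- rhs_eq by auto.
  apply (is_derive_ext_loc I); [| apply Hder; auto].
  apply (filter_imp (fun y => 0 < y)); [| apply open_gt; auto].
  intros y Hy; rewrite Iext_eq; lra.
Qed.

Lemma conv_piece_le a b t c : a <= b -> (forall s, a <= s <= b -> Iext s <= c) ->
  RInt (fun s => g (t - s) * Iext s) a b <= c * RInt g (t - b) (t - a).
Proof.
  intros Hab Hc; rewrite <- RInt_lognormal_reflect by auto.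
  rewrite <- RInt_scal_R by (apply ex_RInt_continuous_R, continuous_lognormal_reflect; auto).
  apply RInt_le; auto.
  - apply ex_RInt_conv_integrand.
  - apply ex_RInt_continuous_R; intros x.
    apply (continuous_mult (K := R_AbsRing) (fun _ => c)); [apply continuous_const |].
    apply continuous_lognormal_reflect; auto.
  - intros s Hs; rewrite (Rmult_comm c).
    apply Rmult_le_compat_l; [apply lognormal_ge0 | apply Hc]; lra.
Qed.

Lemma conv_piece_ge a b t c : a <= b -> (forall s, a <= s <= b -> c <= Iext s) ->
  c * RInt g (t - b) (t - a) <= RInt (fun s => g (t - s) * Iext s) a b.
Proof.
  intros Hab Hc; rewrite <- RInt_lognormal_reflect by auto.
  rewrite <- RInt_scal_R by (apply ex_RInt_continuous_R, continuous_lognormal_reflect; auto).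
  apply RInt_le; auto.
  - apply ex_RInt_continuous_R; intros x.
    apply (continuous_mult (K := R_AbsRing) (fun _ => c)); [apply continuous_const |].
    apply continuous_lognormal_reflect; auto.
  - apply ex_RInt_conv_integrand.
  - intros s Hs; rewrite (Rmult_comm c).
    apply Rmult_le_compat_l; [apply lognormal_ge0 | apply Hc]; lra.
Qed.

Lemma conv_le t c : 0 <= t -> (forall s, 0 <= s <= t -> Iext s <= c) -> conv t <= c * G t.
Proof.
  intros Ht Hc; pose proof (conv_piece_le 0 t t c Ht Hc) as H.
  rewrite Rminus_0_r, Rminus_eq_0 in H; exact H.
Qed.

Lemma conv_ge_split A t c : 0 <= A <= t ->
  (forall s, 0 <= s <= A -> 0 <= Iext s) -> (forall s, A <= s <= t -> c <= Iext s) ->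
  c * G (t - A) <= conv t.
Proof.
  intros HA H0 Hc; unfold conv, lognormal_cdf.
  rewrite <- (RInt_Chasles_R _ 0 A t) by apply ex_RInt_conv_integrand.
  pose proof (conv_piece_ge 0 A t 0 ltac:(lra) H0).
  pose proof (conv_piece_ge A t t c ltac:(lra) Hc).
  rewrite Rminus_0_r, Rminus_eq_0 in *; lra.
Qed.

Lemma Rabs_conv_le t B : 0 <= t -> (forall s, 0 <= s <= t -> Rabs (Iext s) <= B) ->
  Rabs (conv t) <= B.
Proof.
  intros Ht HB; unfold conv.
  pose proof (conv_piece_le 0 t t B Ht (fun s Hs => Rle_trans _ _ _ (Rle_abs _) (HB s Hs))).
  assert (HBl : forall s, 0 <= s <= t -> - B <= Iext s)
    by (intros s Hs; pose proof (HB s Hs); pose proof (Rle_abs (- Iext s));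
        rewrite Rabs_Ropp in *; lra).
  pose proof (conv_piece_ge 0 t t (- B) Ht HBl).
  rewrite Rminus_0_r, Rminus_eq_0 in *.
  pose proof (lognormal_cdf_ge0 mu sigma Hsigma t Ht).
  pose proof (lognormal_cdf_le1 mu sigma Hsigma t Ht).
  unfold lognormal_cdf in *.
  assert (0 <= B) by (pose proof (HB 0 ltac:(lra)); pose proof (Rabs_pos (Iext 0)); lra).
  apply Rabs_le; split; nra.
Qed.

Lemma Iext_bounded T : 0 <= T -> exists B, forall s, 0 <= s <= T -> Rabs (Iext s) <= B.
Proof.
  intros HT; destruct (continuity_ab_maj (fun x => Rabs (Iext x)) 0 T HT) as [m [Hm _]].
  { intros; apply (continuity_pt_comp Iext Rabs); [apply continuity_Iext | apply Rcontinuity_abs]. }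
  exists (Rabs (Iext m)); auto.
Qed.

Lemma Rabs_rhs_ext_le x B : 0 <= x -> (forall s, 0 <= s <= x -> Rabs (Iext s) <= B) ->
  Rabs (rhs_ext x) <= beta * Rabs (M - Iext x) * (2 * B).
Proof.
  intros Hx HB; unfold rhs_ext.
  assert (Hdiff : Rabs (Iext x - conv x) <= 2 * B).
  { pose proof (Rabs_conv_le x B Hx HB); pose proof (HB x ltac:(lra)).
    pose proof (Rabs_triang (Iext x) (- conv x)); rewrite Rabs_Ropp in *; unfold Rminus; lra. }
  rewrite !Rabs_mult, (Rabs_pos_eq beta) by lra.
  apply Rmult_le_compat_l; [apply Rmult_le_pos, Rabs_pos; lra | auto].
Qed.

Lemma continuity_Iext_sub_M : continuity (fun x => Iext x - M).
Proof.
  apply continuity_minus; [apply continuity_Iext | apply continuity_const; intros ? ?; auto].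
Qed.

(* [Iext - M] vanishes where it crosses 0 and satisfies a Gronwall inequality afterwards. *)
Lemma Iext_le_M t : 0 <= t -> Iext t <= M.
Proof.
  intros Ht; apply Rnot_lt_le; intros Hgt.
  destruct (IVT_cor (fun x => Iext x - M) 0 t continuity_Iext_sub_M) as [c [Hc Hwc]]; [lra | |].
  { rewrite Iext_eq by lra; assert (I 0 - M <= 0) by lra; nra. }
  destruct (Iext_bounded t Ht) as [B HB].
  assert (HB0 : 0 <= B) by (pose proof (HB 0 ltac:(lra)); pose proof (Rabs_pos (Iext 0)); lra).
  enough (Iext t - M = 0) by lra.
  apply (gronwall_zero (fun x => Iext x - M) rhs_ext c t (beta * (2 * B)));
    [nra | auto | intros; apply continuity_Iext_sub_M | | | lra].
  - intros x Hx; replace (rhs_ext x) with (rhs_ext x - 0) by ring.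
    apply (is_derive_minus (V := R_NormedModule) Iext (fun _ => M)); [apply is_derive_Iext; lra |].
    apply (@is_derive_const R_AbsRing R_NormedModule).
  - intros x B' Hx HB'.
    apply Rle_trans with (beta * Rabs (M - Iext x) * (2 * B));
      [apply Rabs_rhs_ext_le; [lra | intros; apply HB; lra] |].
    rewrite Rabs_minus_sym; replace (beta * (2 * B) * B') with (beta * B' * (2 * B)) by ring.
    apply Rmult_le_compat_r, Rmult_le_compat_l; [lra | lra | apply HB'; lra].
Qed.

Lemma Iext_eq0 : I 0 = 0 -> forall t, 0 <= t -> Iext t = 0.
Proof.
  intros HI t Ht; destruct (Iext_bounded t Ht) as [B HB].
  assert (HB0 : 0 <= B) by (pose proof (HB 0 ltac:(lra)); pose proof (Rabs_pos (Iext 0)); lra).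
  apply (gronwall_zero Iext rhs_ext 0 t (beta * (M + B) * 2));
    [nra | rewrite Iext_eq; lra | | | | lra].
  - intros; apply continuity_Iext.
  - intros; apply is_derive_Iext; lra.
  - intros x B' Hx HB'.
    apply Rle_trans with (beta * Rabs (M - Iext x) * (2 * B'));
      [apply Rabs_rhs_ext_le; [lra | auto] |].
    assert (Rabs (M - Iext x) <= M + B).
    { pose proof (Rabs_triang M (- Iext x)); rewrite Rabs_Ropp, (Rabs_pos_eq M) in * by lra.
      pose proof (HB x ltac:(lra)); unfold Rminus; lra. }
    assert (0 <= B') by (pose proof (HB' 0 ltac:(lra)); pose proof (Rabs_pos (Iext 0)); lra).
    replace (beta * (M + B) * 2 * B') with (beta * (M + B) * (2 * B')) by ring.
    apply Rmult_le_compat_r, Rmult_le_compat_l; lra.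
Qed.

Lemma Iext_le_of_rhs_ext_ge0 a b : 0 <= a <= b -> (forall t, a < t < b -> 0 <= rhs_ext t) ->
  Iext a <= Iext b.
Proof.
  intros Hab Hnn; destruct (Req_dec a b) as [-> | Hne]; [lra |].
  destruct (mvt_interior Iext rhs_ext a b) as [c [Hc E]];
    [lra | intros; apply is_derive_Iext; lra | intros; apply continuity_Iext |].
  pose proof (Hnn c Hc); assert (0 <= rhs_ext c * (b - a)) by (apply Rmult_le_pos; lra); lra.
Qed.

(* While [I] is nondecreasing up to [T], the convolution at [t] near [T] is at most about
   [I T * G (T + 1)], which stays below [I t] because the log-normal mass is below 1. *)
Lemma rhs_ext_ge0_extend T : 0 < I 0 -> 0 <= T -> (forall t, 0 < t < T -> 0 <= rhs_ext t) ->
  exists d, 0 < d /\ forall t, 0 < t < T + d -> 0 <= rhs_ext t.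
Proof.
  intros HI HT Hnn.
  set (p := Iext T).
  assert (Hbelow : forall s, 0 <= s <= T -> Iext s <= p)
    by (intros; apply Iext_le_of_rhs_ext_ge0; [lra | intros; apply Hnn; lra]).
  assert (Hp : 0 < p) by (pose proof (Hbelow 0 ltac:(lra)) as H; rewrite Iext_eq in H; lra).
  set (gam := 1 - G (T + 1)).
  assert (Hgam : 0 < gam)
    by (unfold gam; pose proof (lognormal_cdf_lt1 mu sigma Hsigma (T + 1)); lra).
  set (eta := p * gam / 4); assert (Heta : 0 < eta) by (unfold eta; nra).
  destruct (continuous_Iext T (fun y => Rabs (y - p) < eta)) as [delta Hdelta].
  { exists (mkposreal eta Heta); intros y Hy; exact Hy. }
  assert (Hnear : forall s, Rabs (s - T) < delta -> p - eta < Iext s < p + eta)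
    by (intros s Hs; pose proof (Hdelta s Hs) as H; apply Rabs_def2 in H; lra).
  exists (Rmin (delta / 2) 1); split; [apply Rmin_glb_lt; [pose proof (cond_pos delta) |]; lra |].
  intros u Hu; pose proof (Rmin_l (delta / 2) 1); pose proof (Rmin_r (delta / 2) 1).
  destruct (Rlt_dec u T) as [HuT | HuT]; [apply Hnn; lra |].
  assert (HIu : p - eta < Iext u) by (apply Hnear, Rabs_def1; lra).
  assert (Hconv : conv u <= (p + eta) * G u).
  { apply conv_le; [lra |]; intros s Hs; destruct (Rle_dec s T); [pose proof (Hbelow s); lra |].
    pose proof (Hnear s ltac:(apply Rabs_def1; lra)); lra. }
  assert (HGu : 0 <= G u <= 1 - gam).
  { split; [apply lognormal_cdf_ge0; lra |].
    unfold gam; pose proof (lognormal_cdf_incr mu sigma Hsigma u (T + 1)); lra. }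
  assert (0 <= M - Iext u) by (pose proof (Iext_le_M u ltac:(lra)); lra).
  assert (0 <= Iext u - conv u) by (assert (p * gam = 4 * eta) by (unfold eta; field); nra).
  unfold rhs_ext; apply Rmult_le_pos; [apply Rmult_le_pos |]; lra.
Qed.

Lemma rhs_ext_ge0 t : 0 < t -> 0 <= rhs_ext t.
Proof.
  destruct (Req_dec (I 0) 0) as [HI | HI].
  - intros Ht; unfold rhs_ext; rewrite (Iext_eq0 HI t) by lra.
    assert (Hconv : Rabs (conv t) <= 0)
      by (apply Rabs_conv_le; [lra | intros; rewrite Iext_eq0, Rabs_R0; lra]).
    pose proof (Rabs_pos (conv t)); replace (conv t) with 0 by (symmetry; apply Rabs_eq_0; lra).
    lra.
  - apply (real_induction (fun t => 0 <= rhs_ext t)); intros T HT; apply rhs_ext_ge0_extend; lra.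
Qed.

Lemma Iext_incr x y : 0 <= x <= y -> Iext x <= Iext y.
Proof. intros Hxy; apply Iext_le_of_rhs_ext_ge0; [lra | intros; apply rhs_ext_ge0; lra]. Qed.

Lemma Iext_ge0 s : 0 <= s -> 0 <= Iext s.
Proof. intros Hs; pose proof (Iext_incr 0 s ltac:(lra)); rewrite (Iext_eq 0) in *; lra. Qed.

Lemma is_lim_conv Linf c :
  (forall x, 0 <= x -> Iext x <= Linf) -> is_lim Iext p_infty Linf ->
  (forall x, 0 <= x -> G x <= c) -> is_lim G p_infty c ->
  is_lim conv p_infty (Linf * c).
Proof.
  intros HIle HIlim HGle HGlim; apply is_lim_spec in HIlim; apply is_lim_spec in HGlim.
  assert (HL : 0 <= Linf)
    by (pose proof (Iext_ge0 0 ltac:(lra)); pose proof (HIle 0 ltac:(lra)); lra).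
  apply is_lim_spec; intros eps; pose proof (cond_pos eps).
  set (e := eps / (Linf + 2)); assert (He : 0 < e) by (apply Rdiv_lt_0_compat; lra).
  assert (e * (Linf + 1) < eps)
    by (unfold e; apply Rmult_lt_reg_r with (Linf + 2); [lra |]; field_simplify; lra).
  destruct (HIlim (mkposreal e He)) as [A1 HA1]; destruct (HGlim (mkposreal e He)) as [A2 HA2].
  simpl in HA1, HA2.
  set (A := Rmax A1 0 + 1).
  assert (HA : A1 < A /\ 0 < A)
    by (unfold A; pose proof (Rmax_l A1 0); pose proof (Rmax_r A1 0); lra).
  exists (A + Rmax A2 0 + 1); intros t Ht.
  assert (HtA : A2 < t - A /\ 0 < t - A)
    by (pose proof (Rmax_l A2 0); pose proof (Rmax_r A2 0); lra).
  assert (Hup : conv t <= Linf * c).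
  { apply Rle_trans with (Linf * G t); [apply conv_le; [lra | intros; apply HIle; lra] |].
    apply Rmult_le_compat_l; [| apply HGle]; lra. }
  assert (Hlow : (Linf - e) * G (t - A) <= conv t).
  { apply conv_ge_split; [lra | intros; apply Iext_ge0; lra |].
    intros s Hs; pose proof (HA1 s ltac:(lra)) as HIs; apply Rabs_def2 in HIs; lra. }
  pose proof (HA2 (t - A) ltac:(lra)) as HGt; apply Rabs_def2 in HGt.
  pose proof (lognormal_cdf_le1 mu sigma Hsigma (t - A) ltac:(lra)).
  assert (Linf * (c - e) <= Linf * G (t - A)) by (apply Rmult_le_compat_l; lra).
  apply Rabs_def1; nra.
Qed.

Lemma is_lim_rhs_ext : exists L0, 0 <= L0 /\ is_lim rhs_ext p_infty L0.
Proof.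
  destruct (is_lim_incr_bounded Iext M Iext_incr Iext_le_M) as [Linf [HIle HIlim]].
  destruct (is_lim_incr_bounded G 1) as [c [HGle HGlim]];
    [intros; apply lognormal_cdf_incr; lra | intros; apply lognormal_cdf_le1; auto |].
  pose proof (is_lim_conv Linf c HIle HIlim HGle HGlim) as Hconv.
  assert (HL : 0 <= Linf <= M).
  { split; [pose proof (HIle 0 ltac:(lra)); pose proof (Iext_ge0 0 ltac:(lra)); lra |].
    apply (is_lim_le_bound Iext); auto using Iext_le_M. }
  assert (Hc : 0 <= c <= 1).
  { split;
      [pose proof (HGle 0 ltac:(lra)); pose proof (lognormal_cdf_ge0 mu sigma Hsigma 0); lra |].
    apply (is_lim_le_bound G); [intros; apply lognormal_cdf_le1 | ]; auto. }
  exists (beta * (M - Linf) * (Linf - Linf * c)); split.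
  - apply Rmult_le_pos; [apply Rmult_le_pos |]; nra.
  - apply (is_lim_mult (fun t => beta * (M - Iext t)) (fun t => Iext t - conv t) p_infty
             (beta * (M - Linf)) (Linf - Linf * c)); [| | exact Logic.I].
    + apply (is_lim_scal_l (fun t => M - Iext t) beta p_infty (M - Linf)).
      apply is_lim_minus'; [apply is_lim_const | auto].
    + apply is_lim_minus'; auto.
Qed.

Lemma is_lim_Derive_I : is_lim (Derive I) p_infty 0.
Proof.
  destruct is_lim_rhs_ext as [L0 [HL0 Hlim]].
  assert (L0 <= 0).
  { apply (lim_derive_le0 Iext rhs_ext M L0); auto.
    - apply is_derive_Iext.
    - intros; apply Iext_le_M; lra. }
  replace L0 with 0 in Hlim by lra.
  apply (is_lim_ext_loc rhs_ext); [exists 0; intros t Ht | exact Hlim].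
  rewrite <- rhs_eq by auto; symmetry; apply is_derive_unique, Hder; auto.
Qed.

End DelayEquation.

Theorem proposition3p8 (M beta mu sigma I0 : R) (I : R -> R) :
  0 < M -> 0 < beta -> 0 < sigma ->
  0 <= I0 <= M ->
  I 0 = I0 ->
  (* I is continuous on [0, oo) (right-continuous at 0) *)
  filterlim I (at_right 0) (locally (I 0)) ->
  (* the equation holds on (0, oo) (with continuity, this makes I a C^1 solution on [0, oo)) *)
  (forall t, 0 < t -> is_derive I t (rhs beta M mu sigma I t)) ->
  is_lim (Derive I) p_infty 0.
Proof.
  intros HM Hbeta Hsigma HI0 <- Hcont0 Hder.
  exact (is_lim_Derive_I M beta mu sigma I HM Hbeta Hsigma HI0 Hcont0 Hder).
Qed.
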